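(* (Principle of Optimality.) Consider an imprecise hidden Markov model as in the context with a fixed output sequence $o_{1:n}\in\mathcal{O}_{1:n}$, under the positivity assumption. Let $k\in\{1,\dots,n-1\}$, $z_{k-1}\in\mathcal{X}_{k-1}$ and $\hat{x}_{k:n}\in\mathcal{X}_{k:n}$. If $\underline{Q}_k(\{\hat{x}_k\}\mid z_{k-1})>0$ and $\underline{S}_k(\{o_k\}\mid\hat{x}_k)>0$, then $$\hat{x}_{k:n}\in\mathrm{opt}(\mathcal{X}_{k:n}\mid z_{k-1},o_{k:n})\ \Rightarrow\ \hat{x}_{k+1:n}\in\mathrm{opt}(\mathcal{X}_{k+1:n}\mid \hat{x}_k,o_{k+1:n}).$$
   Context: Setting: $n\ge1$; $\mathcal{X}_0=\{x_0\}$ a singleton; finite non-empty sets $\mathcal{X}_1,\dots,\mathcal{X}_n$, $\mathcal{O}_1,\dots,\mathcal{O}_n$; $\mathcal{X}_{k:\ell}=\times_{r=k}^\ell\mathcal{X}_r$, $\mathcal{O}_{k:\ell}=\times_{r=k}^\ell\mathcal{O}_r$. Gambles are real maps on finite sets; a coherent lower prevision $\underline{P}$ satisfies $\underline{P}(f)\ge\min f$, $\underline{P}(\lambda f)=\lambda\underline{P}(f)$ for $\lambda\ge0$, $\underline{P}(f+g)\ge\underline{P}(f)+\underline{P}(g)$; $\overline{P}(f)=-\underline{P}(-f)$; $\underline{P}(A)=\underline{P}(\mathbb{I}_A)$. Local models: coherent $\underline{Q}_k(\cdot\mid z_{k-1})$ on gambles on $\mathcal{X}_k$ ($z_{k-1}\in\mathcal{X}_{k-1}$)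 and $\underline{S}_k(\cdot\mid z_k)$ on gambles on $\mathcal{O}_k$ ($z_k\in\mathcal{X}_k$), $k=1,\dots,n$. Joint models: $\underline{E}_n(\cdot\mid z_n):=\underline{S}_n(\cdot\mid z_n)$; for $k<n$, $\underline{E}_k(\cdot\mid X_k)$ (on gambles on $\mathcal{X}_{k+1:n}\times\mathcal{O}_{k:n}$) is the conditionally independent natural extension of $\underline{S}_k(\cdot\mid X_k)$ and $\underline{P}_{k+1}(\cdot\mid X_k)$ (the pointwise smallest separately coherent conditional lower prevision jointly coherent with and extending both, such that given $X_k$, $O_k$ and $(X_{k+1:n},O_{k+1:n})$ are epistemically irrelevant to each other); for gambles $f$ on $\mathcal{X}_{k:n}\times\mathcal{O}_{k:n}$, $\underline{P}_k(f\mid z_{k-1}):=\underline{Q}_k\big(\sum_{z_k}\mathbb{I}_{\{z_k\}}\underline{E}_k(f(z_k,\cdot)\mid z_k)\,\big|\,z_{k-1}\big)$. Standing positivity assumption: $\overline{Q}_k(\{z_k\}\mid z_{k-1})>0$ and $\overline{S}_k(\{o_k\}\mid z_k)>0$ for all $k,z_{k-1},z_k,o_k$. Maximal subsequences: for $k\in\{1,\dots,n\}$ and $z_{k-1}\in\mathcal{X}_{k-1}$, $\hat{x}_{k:n}\in\mathrm{opt}(\mathcal{X}_{k:n}\mid z_{k-1},o_{k:n})$ iff for all $x_{k:n}\in\mathcal{X}_{k:n}$, $\underline{P}_k\big(\mathbb{I}_{o_{k:n}}[\mathbb{I}_{x_{k:n}}-\mathbb{I}_{\hat{x}_{k:n}}]\,\big|\,z_{k-1}\big)\le0$,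 where $\mathbb{I}_{x_{k:n}},\mathbb{I}_{o_{k:n}}$ are indicators of singletons regarded as gambles on $\mathcal{X}_{k:n}\times\mathcal{O}_{k:n}$. *)

From HB Require Import structures.
From mathcomp Require Import all_boot all_order all_algebra.
From mathcomp Require Import all_classical all_reals.
Set Implicit Arguments. Unset Strict Implicit. Unset Printing Implicit Defensive.
Import Order.TTheory GRing.Theory Num.Theory.
Local Open Scope ring_scope.
Local Open Scope classical_set_scope.

Definition coherent (R : realType) (T : finType) (P : (T -> R) -> R) : Prop :=
  [/\ (forall f : T -> R, exists x : T, f x <= P f),
      (forall (l : R) (f : T -> R), 0 <= l -> P (fun x => l * f x) = l * P f) &
      (forall f g : T -> R, P f + P g <= P (fun x => f x + g x))].

Definition upper (R : realType) (T : finType) (P : (T -> R) -> R) (f : T -> R) : R :=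
  - P (fun x => - f x).

Definition ind (R : realType) (T : finType) (a : T) : T -> R :=
  fun x => (x == a)%:R.

(* A conditional lower prevision P(.|B) on gambles on T, where the partition B
   of T is the one induced by a map cpi : T -> cz (block of w = cpi w). *)
Record cmodel (R : realType) (T : finType) := CModel {
  cz : finType;
  cpi : T -> cz;
  cP : cz -> (T -> R) -> R }.
Arguments cz {R T} _.
Arguments cpi {R T} _ _.
Arguments cP {R T} _ _ _.

Definition cgain (R : realType) (T : finType) (m : cmodel R T) (f : T -> R) : T -> R :=
  fun w => f w - cP m (cpi m w) f.

Definition csupp (R : realType) (T : finType) (m : cmodel R T) (f : T -> R) (w : T) : Prop :=
  exists w', cpi m w' = cpi m w /\ f w' <> 0.

(* Walley's (Williams-Walley) coherence of finitely many conditional lower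
   previsions with domains all gambles on the finite set T: for all gambles
   f_j, all j0, f0 and block B0 = {w | cpi_{j0} w = z0},
     sup_{w in B0 \cup S(f)} [sum_j G_j(f_j|B_j) - G_{j0}(f0|B0)](w) >= 0
   (on a finite set: the maximum is attained). *)
Definition jointly_coherent (R : realType) (T : finType) (m : nat)
    (ms : 'I_m -> cmodel R T) : Prop :=
  forall (fs : 'I_m -> T -> R) (j0 : 'I_m) (f0 : T -> R) (z0 : cz (ms j0)),
  exists w : T,
    (cpi (ms j0) w = z0 \/ exists j : 'I_m, csupp (ms j) (fs j) w) /\
    0 <= \sum_(j < m) cgain (ms j) (fs j) w
         - (if cpi (ms j0) w == z0 then cgain (ms j0) f0 w else 0).

Definition unitF : finType := Finite.clone unit _.

(* E on gambles on A x B is an independent product of P1 (on A) and P2 (on B):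
   E is coherent, extends both marginals, and E is jointly coherent with the
   conditional models expressing that B is epistemically irrelevant to A
   (E(f|b) = P1(f(.,b))) and A is epistemically irrelevant to B
   (E(f|a) = P2(f(a,.))). *)
Definition indep_product (R : realType) (A B : finType)
    (P1 : (A -> R) -> R) (P2 : (B -> R) -> R)
    (E : ((A * B)%type -> R) -> R) : Prop :=
  [/\ coherent E,
      (forall g : A -> R, E (fun w => g w.1) = P1 g),
      (forall h : B -> R, E (fun w => h w.2) = P2 h) &
      jointly_coherent (fun j : 'I_3 =>
        match val j with
        | 0 => @CModel R _ unitF (fun _ => tt) (fun _ => E)
        | 1 => @CModel R _ B (fun w => w.2) (fun b f => P1 (fun a => f (a, b)))
        | _ => @CModel R _ A (fun w => w.1) (fun a f => P2 (fun b => f (a, b)))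
        end)].

(* the independent natural extension: the pointwise smallest independent
   product (taken as the pointwise infimum of all independent products). *)
Definition ine (R : realType) (A B : finType)
    (P1 : (A -> R) -> R) (P2 : (B -> R) -> R) (f : (A * B)%type -> R) : R :=
  inf [set r : R | exists E, indep_product P1 P2 E /\ r = E f].

(* X k, O k : state / output spaces (families of finite types).
   W d k := O_k x X_{k+1:k+d} x O_{k+1:k+d}  (encoded as nested pairs),
   Y d k := X_k x W d k = X_{k:k+d} x O_{k:k+d}. *)
Fixpoint W (X O : nat -> finType) (d k : nat) : finType :=
  match d with
  | 0 => O k
  | d'.+1 => Finite.clone (O k * (X k.+1 * W X O d' k.+1))%type _
  end.
Definition Y (X O : nat -> finType) (d k : nat) : finType :=
  Finite.clone (X k * W X O d k)%type _.

Fixpoint XS (X : nat -> finType) (d k : nat) : finType :=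
  match d with
  | 0 => X k
  | d'.+1 => Finite.clone (X k * XS X d' k.+1)%type _
  end.

Fixpoint projX (X O : nat -> finType) (d : nat) : forall k, Y X O d k -> XS X d k :=
  match d return forall k, Y X O d k -> XS X d k with
  | 0 => fun k y => y.1
  | d'.+1 => fun k y => (y.1, @projX X O d' k.+1 y.2.2)
  end.

Fixpoint projO (X O : nat -> finType) (d : nat) : forall k, Y X O d k -> XS O d k :=
  match d return forall k, Y X O d k -> XS O d k with
  | 0 => fun k y => y.2
  | d'.+1 => fun k y => (y.2.1, @projO X O d' k.+1 y.2.2)
  end.

(* Local models: Q k z = Q_{k+1}(. | z) for z in X_k; S k z = S_k(. | z). *)
(* Joint models E_k(.|z_k) on gambles on W d k (with k + d = n):
   E_n = S_n, E_k = independent natural extension of S_k(.|z_k) and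
   P_{k+1}(.|z_k), where
   P_{k+1}(f|z_k) = Q_{k+1}( sum_{z} I_{z} E_{k+1}(f(z,.)|z) | z_k ). *)
Fixpoint Ecal (R : realType) (X O : nat -> finType)
    (Q : forall k, X k -> (X k.+1 -> R) -> R)
    (S : forall k, X k -> (O k -> R) -> R) (d : nat) :
    forall k, X k -> (W X O d k -> R) -> R :=
  match d return forall k, X k -> (W X O d k -> R) -> R with
  | 0 => fun k z g => S k z g
  | d'.+1 => fun k z g =>
      @ine R (O k) (Y X O d' k.+1) (S k z)
        (fun h => Q k z (fun x => @Ecal R X O Q S d' k.+1 x (fun w => h (x, w)))) g
  end.

(* Pcal Q S d j z = P_{j+1}(. | z) on gambles on Y d (j+1), for z in X_j. *)
Definition Pcal (R : realType) (X O : nat -> finType)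
    (Q : forall k, X k -> (X k.+1 -> R) -> R)
    (S : forall k, X k -> (O k -> R) -> R) (d j : nat) (z : X j)
    (f : Y X O d j.+1 -> R) : R :=
  Q j z (fun x => @Ecal R X O Q S d j.+1 x (fun w => f (x, w))).

(* maximal subsequences: xh in opt(X_{k:n} | z_{k-1}, o_{k:n}) with k = j+1,
   n = k + d, z in X_j. *)
Definition opt (R : realType) (X O : nat -> finType)
    (Q : forall k, X k -> (X k.+1 -> R) -> R)
    (S : forall k, X k -> (O k -> R) -> R) (d j : nat) (z : X j)
    (o : XS O d j.+1) (xh : XS X d j.+1) : Prop :=
  forall x : XS X d j.+1,
    @Pcal R X O Q S d j z (fun y => (@projO X O d j.+1 y == o)%:R * ((@projX X O d j.+1 y == x)%:R - (@projX X O d j.+1 y == xh)%:R))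
      <= 0.

Arguments ind {R T} a _.
Arguments upper {R T} P f.

From HB Require Import structures.
From mathcomp Require Import all_boot all_order all_algebra.
From mathcomp Require Import all_classical all_reals.
From mathcomp Require Import ring lra.
Set Implicit Arguments. Unset Strict Implicit. Unset Printing Implicit Defensive.
Import Order.TTheory GRing.Theory Num.Theory.
Local Open Scope ring_scope.
Local Open Scope classical_set_scope.

(* Suppose some x_{k+1:n} beats xh_{k+1:n} given xh_k, i.e. the gamble
   g = I_{o_{k+1:n}} [I_x - I_xh] has P_{k+1}(g | xh_k) > 0.  Compare
   (xh_k, x) with xh_{k:n}: the corresponding gamble vanishes off
   X_k = xh_k, where it equals I_{o_k} (x) g; hence its P_k-value is
   Q_k(I_{xh_k}) times E_k(I_{o_k} (x) g | xh_k), and it suffices to see that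
   the latter is positive.  For every independent product E of S_k and
   P_{k+1}, joint coherence with the model P_{k+1}(. | O_k) gives
   E(I_{o_k} (x) g) >= E(I_{o_k} P_{k+1}(g)) = S_k(I_{o_k}) P_{k+1}(g) > 0,
   the middle gamble depending on O_k only; so the same bound holds for the
   infimum over all E.

   That infimum is only meaningful if independent products exist (the
   infimum of the empty set of reals is 0).  One is the lower envelope of
   the products p1 (x) p2 of linear previsions dominating S_k and P_{k+1};
   each coherent lower prevision is the lower envelope of its dominating
   linear previsions by a finite-dimensional Hahn-Banach argument. *)

Lemma finite_argmin (R : realType) (T : finType) (x0 : T) (f : T -> R) :
  exists y, forall x, f y <= f x.
Proof.
by case: (arg_minP f (isT : xpredT x0)) => y _ h; exists y => x; exact: h.
Qed.

Lemma finite_approx_ge0 (R : realType) (T : finType) (P : T -> Prop) (V : T -> R) :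
  (forall e, 0 < e -> exists w, P w /\ - e <= V w) -> exists w, P w /\ 0 <= V w.
Proof.
move=> approx; apply: boolp.contrapT => none.
have neg w : P w -> V w < 0.
  by move=> Pw; rewrite ltNge; apply/negP => V0; apply: none; exists w.
have [w0 _] := approx 1 ltr01.
pose gap w := if boolp.pselect (P w) then - V w else 1.
have gap_gt0 w : 0 < gap w.
  by rewrite /gap; case: boolp.pselect => // Pw; rewrite oppr_gt0 neg.
have [y ymin] := finite_argmin w0 gap.
have [w [Pw Vw]] := approx (gap y / 2) (divr_gt0 (gap_gt0 y) (ltr0Sn R 1)).
have gap_w : gap w = - V w by rewrite /gap; case: boolp.pselect.
have := ymin w; rewrite gap_w; have := gap_gt0 y; lra.
Qed.

Section Expectation.
Variables (R : realType) (T : finType).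
Implicit Types (p f g : T -> R).

Definition expect p f : R := \sum_x p x * f x.

Definition pmf p := (forall x, 0 <= p x) /\ \sum_x p x = 1.

Lemma expectD p f g : expect p (fun x => f x + g x) = expect p f + expect p g.
Proof. by rewrite /expect -big_split; apply: eq_bigr => x _; rewrite mulrDr. Qed.

Lemma expectZ p f l : expect p (fun x => l * f x) = l * expect p f.
Proof. by rewrite /expect mulr_sumr; apply: eq_bigr => x _; rewrite mulrCA. Qed.

Lemma expectN p f : expect p (fun x => - f x) = - expect p f.
Proof. by rewrite /expect -sumrN; apply: eq_bigr => x _; rewrite mulrN. Qed.

Lemma expect_cst p c : expect p (fun=> c) = c * \sum_x p x.
Proof. by rewrite /expect mulr_sumr; apply: eq_bigr => x _; rewrite mulrC. Qed.

Lemma expect_ind p a : expect p (ind a) = p a.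
Proof.
rewrite /expect (bigD1 a) //= /ind eqxx mulr1 big1 ?addr0 // => x /negPf ->.
by rewrite mulr0.
Qed.

Lemma expect_centered p f :
  \sum_x p x = 1 -> expect p (fun x => f x - expect p f) = 0.
Proof. by move=> p1; rewrite expectD expectN expect_cst p1 mulr1 subrr. Qed.

Lemma pmf_support p : pmf p -> exists x, 0 < p x.
Proof.
case=> p0 p1; apply: boolp.contrapT => none.
have : \sum_x p x = 0.
  apply: big1 => x _; apply/eqP; rewrite eq_le p0 andbT leNgt; apply/negP => px.
  by apply: none; exists x.
by rewrite p1 => /eqP; rewrite oner_eq0.
Qed.

Lemma expect_ge p f c : pmf p -> (forall x, c <= f x) -> c <= expect p f.
Proof.
case=> p0 p1 cf; rewrite -[c]mul1r -p1 mulr_suml /expect.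
by apply: ler_sum => x _; apply: ler_wpM2l.
Qed.

Lemma coherent_expect p : pmf p -> coherent (expect p).
Proof.
move=> pp; split.
- move=> f; have [x0 _] := pmf_support pp.
  by have [y ymin] := finite_argmin x0 f; exists y; apply: expect_ge.
- by move=> l f _; rewrite expectZ.
- by move=> f g; rewrite expectD.
Qed.

Lemma expect_ge0_witness (q V : T -> R) (P : T -> Prop) :
  (forall w, 0 <= q w) -> 0 <= expect q V -> (exists w0, P w0 /\ 0 < q w0) ->
  (forall w, ~ P w -> V w = 0) -> exists w, P w /\ 0 <= V w.
Proof.
move=> q0 EV [w0 [Pw0 qw0]] V0; apply: boolp.contrapT => none.
have neg w : P w -> V w < 0.
  by move=> Pw; rewrite ltNge; apply/negP => V0w; apply: none; exists w.
suff : expect q V < 0 by lra.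
rewrite /expect (bigD1 w0) //=.
have rest : \sum_(w | w != w0) q w * V w <= 0.
  apply: sumr_le0 => w _; case: (boolp.pselect (P w)) => [Pw|nPw].
    by apply: mulr_ge0_le0 => //; apply: ltW; apply: neg.
  by rewrite V0 // mulr0.
have : q w0 * V w0 < 0 by rewrite pmulr_rlt0 // neg.
lra.
Qed.

End Expectation.

Section Coherence.
Variables (R : realType) (T : finType) (P : (T -> R) -> R).
Hypothesis cP : coherent P.
Implicit Types (f g : T -> R).

Lemma coherent_ge_min f : exists x, f x <= P f.
Proof. by case: cP. Qed.

Lemma coherentZ l f : 0 <= l -> P (fun x => l * f x) = l * P f.
Proof. by case: cP => _ + _; apply. Qed.

Lemma coherentD f g : P f + P g <= P (fun x => f x + g x).
Proof. by case: cP. Qed.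

Lemma coherent0 : P (fun=> 0) = 0.
Proof.
rewrite -[RHS](mul0r (P (fun=> 0))) -coherentZ //.
by congr P; apply: boolp.funext => x; rewrite mul0r.
Qed.

Lemma coherent_le f g : (forall x, f x <= g x) -> P f <= P g.
Proof.
move=> fg; have := coherentD f (fun x => g x - f x).
have -> : (fun x => f x + (g x - f x)) = g.
  by apply: boolp.funext => x; rewrite addrC subrK.
have [x gfx] := coherent_ge_min (fun x => g x - f x).
have : 0 <= g x - f x by rewrite subr_ge0.
lra.
Qed.

Lemma upperD f g : upper P (fun x => f x + g x) <= upper P f + upper P g.
Proof.
rewrite /upper; have := coherentD (fun x => - f x) (fun x => - g x).
have -> : (fun x => - f x + - g x) = (fun x => - (f x + g x)).
  by apply: boolp.funext => x; rewrite opprD.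
lra.
Qed.

Lemma upperZ l f : 0 <= l -> upper P (fun x => l * f x) = l * upper P f.
Proof.
move=> l0; rewrite /upper mulrN -coherentZ //; congr (- P _).
by apply: boolp.funext => x; rewrite mulrN.
Qed.

Definition tilt (h v : T -> R) : R :=
  inf [set r | exists2 t, 0 <= t & r = upper P (fun x => v x + t * h x) - t * upper P h].

Lemma tilt_lbound h v t : 0 <= t ->
  - upper P (fun x => - v x) <= upper P (fun x => v x + t * h x) - t * upper P h.
Proof.
move=> t0; have := upperD (fun x => v x + t * h x) (fun x => - v x).
have -> : (fun x => v x + t * h x + - v x) = (fun x => t * h x).
  by apply: boolp.funext => x; rewrite addrC addKr.
rewrite upperZ //; lra.
Qed.

Lemma tilt_le h v t : 0 <= t ->
  tilt h v <= upper P (fun x => v x + t * h x) - t * upper P h.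
Proof.
move=> t0; apply: ge_inf; last by exists t.
by exists (- upper P (fun x => - v x)) => r [s s0 ->]; apply: tilt_lbound.
Qed.

Lemma tilt_ge h v c :
  (forall t, 0 <= t -> c <= upper P (fun x => v x + t * h x) - t * upper P h) ->
  c <= tilt h v.
Proof.
move=> lb; apply: lb_le_inf; first by eexists; exists 0.
by move=> r [t t0 ->]; apply: lb.
Qed.

Lemma tilt_le_upper h v : tilt h v <= upper P v.
Proof.
have := tilt_le h v (lexx 0); rewrite mul0r subr0.
by have -> : (fun x => v x + 0 * h x) = v by apply: boolp.funext => x; rewrite mul0r addr0.
Qed.

Lemma tilt_opp h : tilt h (fun x => - h x) <= - upper P h.
Proof.
have := tilt_le h (fun x => - h x) ler01; rewrite mul1r.
have -> : (fun x => - h x + 1 * h x) = (fun=> 0).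
  by apply: boolp.funext => x; rewrite mul1r addNr.
by rewrite /upper (_ : (fun _ => - 0) = fun=> 0) ?coherent0 ?oppr0 ?sub0r //;
  apply: boolp.funext => x; rewrite oppr0.
Qed.

Lemma tiltD h v w : tilt h (fun x => v x + w x) <= tilt h v + tilt h w.
Proof.
have split_t t s : 0 <= t -> 0 <= s -> tilt h (fun x => v x + w x) <=
    (upper P (fun x => v x + t * h x) - t * upper P h) +
    (upper P (fun x => w x + s * h x) - s * upper P h).
  move=> t0 s0; have := tilt_le h (fun x => v x + w x) (addr_ge0 t0 s0).
  have := upperD (fun x => v x + t * h x) (fun x => w x + s * h x).
  have -> : (fun x => v x + t * h x + (w x + s * h x)) =
            (fun x => v x + w x + (t + s) * h x).
    by apply: boolp.funext => x; rewrite mulrDl; lra.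
  lra.
suff : tilt h (fun x => v x + w x) - tilt h v <= tilt h w by lra.
apply: tilt_ge => s s0.
suff : tilt h (fun x => v x + w x) -
    (upper P (fun x => w x + s * h x) - s * upper P h) <= tilt h v by lra.
by apply: tilt_ge => t t0; have := split_t t s t0 s0; lra.
Qed.

Lemma tiltZ h v l : 0 < l -> tilt h (fun x => l * v x) = l * tilt h v.
Proof.
move=> l0; have l0' := ltW l0.
have scale t : upper P (fun x => l * v x + l * t * h x) =
               l * upper P (fun x => v x + t * h x).
  by rewrite -upperZ //; congr (upper P _); apply: boolp.funext => x; ring.
apply/eqP; rewrite eq_le; apply/andP; split.
- rewrite -ler_pdivrMl //; apply: tilt_ge => t t0; rewrite ler_pdivrMl //.
  have := tilt_le h (fun x => l * v x) (mulr_ge0 l0' t0).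
  by rewrite scale mulrBr mulrA.
- apply: tilt_ge => t t0.
  have := tilt_le h v (divr_ge0 t0 l0'); rewrite -(ler_pM2l l0) mulrBr mulrA.
  have -> : l * (t / l) = t by field; rewrite gt_eqF.
  by rewrite -scale (_ : l * (t / l) = t) //; field; rewrite gt_eqF.
Qed.

End Coherence.

Section HahnBanach.
Variables (R : realType) (T : finType) (U : (T -> R) -> R).
Hypothesis UD : forall f g, U (fun x => f x + g x) <= U f + U g.
Hypothesis UZ : forall l f, 0 < l -> U (fun x => l * f x) = l * U f.

Definition vanishes_off (s : seq T) (v : T -> R) := forall x, x \notin s -> v x = 0.

Lemma sublinear0 : U (fun=> 0) = 0.
Proof.
have := UZ (fun=> 0) (ltr0Sn R 1).
rewrite (_ : (fun _ => _ * 0) = fun=> 0); last by apply: boolp.funext => x; rewrite mulr0.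
lra.
Qed.

Lemma sublinear_extend_scaled (s : seq T) (e : T) (p : T -> R) (c : R) :
  (forall v, vanishes_off s v -> expect p v <= U v) ->
  (forall d, vanishes_off s d -> expect p d - U (fun x => d x - ind e x) <= c) ->
  (forall d, vanishes_off s d -> c <= U (fun x => d x + ind e x) - expect p d) ->
  forall d t, vanishes_off s d -> expect p d + t * c <= U (fun x => d x + t * ind e x).
Proof.
move=> dom lo hi d t vd.
have scaled l k : 0 < l -> U (fun x => d x + l * k * ind e x) =
    l * U (fun x => l^-1 * d x + k * ind e x) /\
    expect p d = l * expect p (fun x => l^-1 * d x).
  move=> l0; have ln0 : l != 0 by rewrite gt_eqF.
  rewrite expectZ mulrA divff // mul1r -UZ //; split => //.
  by congr U; apply: boolp.funext => x; field.
have vd' l : vanishes_off s (fun x => l^-1 * d x) by move=> x xs; rewrite vd // mulr0.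
have [t0|t0|->] := ltrgtP t 0.
- have nt0 : 0 < - t by rewrite oppr_gt0.
  have := scaled (- t) (-1) nt0; rewrite mulrN1 opprK => -[-> ->].
  have := lo _ (vd' (- t)); rewrite -(ler_pM2l nt0).
  have -> : (fun x => (- t)^-1 * d x - ind e x) = (fun x => (- t)^-1 * d x + -1 * ind e x).
    by apply: boolp.funext => x; rewrite mulN1r.
  lra.
- have := scaled t 1 t0; rewrite mulr1 => -[-> ->].
  have := hi _ (vd' t); rewrite -(ler_pM2l t0).
  have -> : (fun x => t^-1 * d x + ind e x) = (fun x => t^-1 * d x + 1 * ind e x).
    by apply: boolp.funext => x; rewrite mul1r.
  lra.
- rewrite mul0r addr0 (_ : (fun x => d x + 0 * ind e x) = d) ?dom //.
  by apply: boolp.funext => x; rewrite mul0r addr0.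
Qed.

Lemma sublinear_extend_point (s : seq T) (e : T) (p : T -> R) :
  (forall v, vanishes_off s v -> expect p v <= U v) ->
  exists c, forall d t, vanishes_off s d ->
    expect p d + t * c <= U (fun x => d x + t * ind e x).
Proof.
move=> dom.
have sep d1 d2 : vanishes_off s d1 -> vanishes_off s d2 ->
    expect p d1 - U (fun x => d1 x - ind e x) <= U (fun x => d2 x + ind e x) - expect p d2.
  move=> v1 v2; have v12 : vanishes_off s (fun x => d1 x + d2 x).
    by move=> x xs; rewrite v1 // v2 // addr0.
  have := dom _ v12; have := UD (fun x => d1 x - ind e x) (fun x => d2 x + ind e x).
  have -> : (fun x => d1 x - ind e x + (d2 x + ind e x)) = (fun x => d1 x + d2 x).
    by apply: boolp.funext => x; lra.
  rewrite expectD; lra.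
pose A := [set r | exists2 d, vanishes_off s d & r = expect p d - U (fun x => d x - ind e x)].
exists (sup A); apply: (sublinear_extend_scaled dom) => d vd.
  apply: ub_le_sup; last by exists d.
  by exists (U (fun x => 0 + ind e x) - expect p (fun=> 0)) => r [d1 v1 ->]; apply: sep.
apply: ge_sup; first by eexists; exists (fun=> 0).
by move=> r [d1 v1 ->]; apply: sep.
Qed.

Lemma sublinear_dominated_on (s : seq T) :
  exists p, forall v, vanishes_off s v -> expect p v <= U v.
Proof.
elim: s => [|e s [p dom]].
  exists (fun=> 0) => v v0; rewrite (_ : v = fun=> 0) ?sublinear0.
    by rewrite /expect big1 // => x _; rewrite mul0r.
  by apply: boolp.funext => x; apply: v0.
have [c ext] := sublinear_extend_point e dom.
exists (fun x => if x == e then c else p x) => v ve.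
pose d x := if x == e then 0 else v x.
have vd : vanishes_off s d.
  move=> x xs; rewrite /d; case: eqP => // /eqP xe; apply: ve.
  by rewrite in_cons negb_or xe.
have -> : v = fun x => d x + v e * ind e x.
  apply: boolp.funext => x; rewrite /d /ind.
  by case: eqP => [->|]; rewrite ?mulr1 ?add0r ?mulr0 ?addr0.
rewrite expectD expectZ expect_ind eqxx (_ : expect _ d = expect p d) ?ext //.
by apply: eq_bigr => x _; rewrite /d; case: eqP => // _; rewrite !mulr0.
Qed.

Lemma sublinear_dominated : exists p, forall v, expect p v <= U v.
Proof.
have [p dom] := sublinear_dominated_on (enum T).
by exists p => v; apply: dom => x; rewrite mem_enum.
Qed.

End HahnBanach.

Definition dominates (R : realType) (T : finType) (P : (T -> R) -> R) (p : T -> R) :=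
  forall f, P f <= expect p f.

Section Envelope.
Variables (R : realType) (T : finType) (P : (T -> R) -> R).
Hypothesis cP : coherent P.

Lemma dominates_pmf p : dominates P p -> pmf p.
Proof.
move=> dom; split.
- move=> x; have [y ley] := coherent_ge_min cP (ind x).
  have := dom (ind x); rewrite expect_ind; apply: le_trans; apply: le_trans ley.
  by rewrite /ind ler0n.
- have := dom (fun=> 1); have := dom (fun=> -1); rewrite !expect_cst.
  have [y1 /= ?] := coherent_ge_min cP (fun=> 1).
  have [y2 /= ?] := coherent_ge_min cP (fun=> -1).
  lra.
Qed.

(* Hahn-Banach for the sublinear functional [tilt P (-g)], which lies below
   the upper prevision and is tight at [g]. *)
Lemma coherent_envelope g : exists2 p, dominates P p & expect p g = P g.
Proof.
pose h x := - g x.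
have [p below] := sublinear_dominated (tiltD cP h) (fun l v => tiltZ cP h v (l := l)).
have dom : dominates P p.
  move=> f; have := le_trans (below (fun x => - f x)) (tilt_le_upper cP h _).
  rewrite expectN /upper (_ : (fun x => - - f x) = f) //; first by lra.
  by apply: boolp.funext => x; rewrite opprK.
exists p => //; apply/eqP; rewrite eq_le dom andbT.
have := le_trans (below (fun x => - h x)) (tilt_opp cP h).
rewrite /upper /h opprK (_ : (fun x => - - g x) = g) //.
by apply: boolp.funext => x; rewrite opprK.
Qed.

End Envelope.

Section LowerEnvelope.
Variables (R : realType) (T : finType) (F : ((T -> R) -> R) -> Prop).
Hypothesis F_coherent : forall E, F E -> coherent E.
Hypothesis F_nonempty : exists E, F E.
Implicit Types (f g : T -> R).

Definition lower_env f : R := inf [set r | exists E, F E /\ r = E f].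

Lemma lower_env_le f E : F E -> lower_env f <= E f.
Proof.
move=> FE; apply: ge_inf; last by exists E.
have [x0 _] := coherent_ge_min (F_coherent FE) f.
have [y ymin] := finite_argmin x0 f.
exists (f y) => r [E' [FE' ->]].
by have [z /(le_trans (ymin z))] := coherent_ge_min (F_coherent FE') f.
Qed.

Lemma lower_env_ge f c : (forall E, F E -> c <= E f) -> c <= lower_env f.
Proof.
have [E0 FE0] := F_nonempty.
by move=> lb; apply: lb_le_inf; [exists (E0 f), E0 | move=> r [E [FE ->]]; apply: lb].
Qed.

Lemma lower_env_approx f e : 0 < e -> exists E, F E /\ E f < lower_env f + e.
Proof.
have [E0 FE0] := F_nonempty.
have ne : [set r | exists E, F E /\ r = E f] !=set0 by exists (E0 f), E0.
move=> e0; have [|r [E [FE ->]] lt] := inf_lt ne (x := lower_env f + e); last by exists E.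
by rewrite ltrDl.
Qed.

Lemma lower_env_coherent : coherent lower_env.
Proof.
have [E0 FE0] := F_nonempty.
split.
- move=> f; have [x0 _] := coherent_ge_min (F_coherent FE0) f.
  have [y ymin] := finite_argmin x0 f; exists y; apply: lower_env_ge => E FE.
  by have [z /(le_trans (ymin z))] := coherent_ge_min (F_coherent FE) f.
- move=> l f; rewrite le0r => /orP[/eqP ->|l0].
  + rewrite mul0r; apply/eqP; rewrite eq_le; apply/andP; split.
      by apply: le_trans (lower_env_le _ FE0) _; rewrite (coherentZ (F_coherent FE0)) ?mul0r.
    by apply: lower_env_ge => E FE; rewrite (coherentZ (F_coherent FE)) ?mul0r.
  + apply/eqP; rewrite eq_le; apply/andP; split.
      rewrite -ler_pdivrMl //; apply: lower_env_ge => E FE.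
      by rewrite ler_pdivrMl // -(coherentZ (F_coherent FE) _ (ltW l0)); apply: lower_env_le.
    apply: lower_env_ge => E FE; rewrite (coherentZ (F_coherent FE) _ (ltW l0)).
    by rewrite ler_pM2l //; apply: lower_env_le.
- move=> f g; apply: lower_env_ge => E FE.
  apply: le_trans (coherentD (F_coherent FE) f g).
  by apply: lerD; apply: lower_env_le.
Qed.

End LowerEnvelope.

Section ProductGains.
Variables (R : realType) (A B : finType).
Implicit Types (w : A * B) (g : A * B -> R).

Definition pprod (p1 : A -> R) (p2 : B -> R) w : R := p1 w.1 * p2 w.2.

Lemma sum_pair (F : A * B -> R) : \sum_w F w = \sum_a \sum_b F (a, b).
Proof. by rewrite pair_big; apply: eq_bigr => -[a b]. Qed.

Lemma pmf_pprod p1 p2 : pmf p1 -> pmf p2 -> pmf (pprod p1 p2).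
Proof.
move=> [p10 p11] [p20 p21]; split=> [w|]; first exact: mulr_ge0.
rewrite sum_pair -p11; apply: eq_bigr => a _.
by rewrite /pprod /= -mulr_sumr p21 mulr1.
Qed.

Lemma expect_pprod_fst p1 p2 (h : A -> R) :
  \sum_b p2 b = 1 -> expect (pprod p1 p2) (fun w => h w.1) = expect p1 h.
Proof.
move=> p21; rewrite /expect sum_pair; apply: eq_bigr => a _ /=.
by rewrite -[RHS]mulr1 -p21 mulr_sumr; apply: eq_bigr => b _; rewrite /pprod /=; ring.
Qed.

Lemma expect_pprod_snd p1 p2 (h : B -> R) :
  \sum_a p1 a = 1 -> expect (pprod p1 p2) (fun w => h w.2) = expect p2 h.
Proof.
move=> p11; rewrite /expect sum_pair exchange_big; apply: eq_bigr => b _ /=.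
by rewrite -[RHS]mulr1 -p11 mulr_sumr; apply: eq_bigr => a _; rewrite /pprod /=; ring.
Qed.

Definition gain_joint p1 p2 g w : R := g w - expect (pprod p1 p2) g.
Definition gain_given_snd p1 g w : R := g w - expect p1 (fun a => g (a, w.2)).
Definition gain_given_fst p2 g w : R := g w - expect p2 (fun b => g (w.1, b)).

Lemma expect_gain_given_snd p1 (r : B -> R) g :
  \sum_a p1 a = 1 -> expect (pprod p1 r) (gain_given_snd p1 g) = 0.
Proof.
move=> p11; rewrite /expect sum_pair exchange_big /=; apply: big1 => b _.
transitivity (r b * expect p1 (fun a => g (a, b) - expect p1 (fun a => g (a, b)))).
  by rewrite mulr_sumr; apply: eq_bigr => a _; rewrite /pprod /gain_given_snd /=; ring.
by rewrite expect_centered // mulr0.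
Qed.

Lemma expect_gain_given_fst (r : A -> R) p2 g :
  \sum_b p2 b = 1 -> expect (pprod r p2) (gain_given_fst p2 g) = 0.
Proof.
move=> p21; rewrite /expect sum_pair /=; apply: big1 => a _.
transitivity (r a * expect p2 (fun b => g (a, b) - expect p2 (fun b => g (a, b)))).
  by rewrite mulr_sumr; apply: eq_bigr => b _; rewrite /pprod /gain_given_fst /=; ring.
by rewrite expect_centered // mulr0.
Qed.

Lemma gain_joint_eq0 p1 p2 g w : (forall w', g w' = 0) -> gain_joint p1 p2 g w = 0.
Proof.
move=> g0; rewrite /gain_joint (_ : g = fun=> 0) ?expect_cst ?mul0r ?subrr //.
exact: boolp.funext.
Qed.

Lemma gain_given_snd_eq0 p1 g w : (forall a, g (a, w.2) = 0) -> gain_given_snd p1 g w = 0.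
Proof.
case: w => a b /= g0; rewrite /gain_given_snd /= g0.
by rewrite (_ : (fun a => g (a, b)) = fun=> 0) ?expect_cst ?mul0r ?subrr //; apply: boolp.funext.
Qed.

Lemma gain_given_fst_eq0 p2 g w : (forall b, g (w.1, b) = 0) -> gain_given_fst p2 g w = 0.
Proof.
case: w => a b /= g0; rewrite /gain_given_fst /= g0.
by rewrite (_ : (fun b => g (a, b)) = fun=> 0) ?expect_cst ?mul0r ?subrr //; apply: boolp.funext.
Qed.

Definition product_gain p1 p2 g0 g1 g2 w : R :=
  gain_joint p1 p2 g0 w + gain_given_snd p1 g1 w + gain_given_fst p2 g2 w.

Lemma expect_product_gain p1 p2 r g0 g1 g2 :
  \sum_a p1 a = 1 ->
  expect (pprod p1 r) (gain_joint p1 p2 g0) = 0 ->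
  expect (pprod p1 r) (gain_given_fst p2 g2) = 0 ->
  expect (pprod p1 r) (product_gain p1 p2 g0 g1 g2) = 0.
Proof.
move=> p11; have := expect_gain_given_snd r g1 p11.
by rewrite /product_gain !expectD; lra.
Qed.

End ProductGains.

Lemma expect_pprod_swap (R : realType) (A B : finType) (p1 : A -> R) (p2 : B -> R)
    (g : A * B -> R) :
  expect (pprod p2 p1) (fun w => g (w.2, w.1)) = expect (pprod p1 p2) g.
Proof.
rewrite /expect !sum_pair exchange_big; apply: eq_bigr => a _.
by apply: eq_bigr => b _; rewrite /pprod /=; ring.
Qed.

Definition vanish_outside (R : realType) (A B : finType) (S : A * B -> Prop)
    (g0 g1 g2 : A * B -> R) :=
  forall w, ~ S w ->
    [/\ forall w', g0 w' = 0, forall a, g1 (a, w.2) = 0 & forall b, g2 (w.1, b) = 0].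

Section GainWitnesses.
Variables (R : realType) (A B : finType) (p1 : A -> R) (p2 : B -> R).
Hypotheses (pp1 : pmf p1) (pp2 : pmf p2).
Variables (g0 g1 g2 : A * B -> R).

Lemma product_gain_joint_witness f :
  exists w, 0 <= product_gain p1 p2 g0 g1 g2 w - gain_joint p1 p2 f w.
Proof.
have [q0 q1] := pmf_pprod pp1 pp2.
have [w0 qw0] := pmf_support (pmf_pprod pp1 pp2).
suff [w [_ ge0]] : exists w, True /\
    0 <= product_gain p1 p2 g0 g1 g2 w - gain_joint p1 p2 f w by exists w.
apply: (expect_ge0_witness q0) => //; last by exists w0.
rewrite expectD expectN expect_product_gain ?expect_centered ?pp1.2 //.
  by rewrite oppr0 addr0.
exact: expect_gain_given_fst pp2.2.
Qed.

(* Take r = p2, unless p1 x p2 does not charge S: then r is the point mass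
   at b0, and the gambles g0 and g2 vanish where p1 x r lives. *)
Lemma product_gain_given_snd_weights (b0 : B) (S : A * B -> Prop) :
  (forall w, w.2 = b0 -> S w) -> vanish_outside S g0 g1 g2 ->
  exists r : B -> R, [/\ forall b, 0 <= r b, exists w, S w /\ 0 < pprod p1 r w,
    expect (pprod p1 r) (gain_joint p1 p2 g0) = 0 &
    expect (pprod p1 r) (gain_given_fst p2 g2) = 0].
Proof.
move=> Sb0 van.
case: (boolp.pselect (exists w, S w /\ 0 < pprod p1 p2 w)) => [mass|nomass].
  exists p2; split=> //; first exact: pp2.1.
    exact: expect_centered (pmf_pprod pp1 pp2).2.
  exact: expect_gain_given_fst pp2.2.
have [a1 pa1] := pmf_support pp1; have [b1 pb1] := pmf_support pp2.
have vanish_at a : 0 < p1 a -> [/\ forall w', g0 w' = 0, forall a', g1 (a', b1) = 0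
                                  & forall b, g2 (a, b) = 0].
  move=> pa; apply: (van (a, b1)) => Sab; apply: nomass.
  by exists (a, b1); split=> //; apply: mulr_gt0.
exists (fun b => (b == b0)%:R); split.
- by move=> b; rewrite ler0n.
- by exists (a1, b0); split; [exact: Sb0 | rewrite /pprod /= eqxx mulr1].
- have [gz _ _] := vanish_at a1 pa1.
  by rewrite /expect big1 // => w _; rewrite gain_joint_eq0 // mulr0.
- rewrite /expect big1 // => -[a b] _; rewrite /pprod /=.
  have := pp1.1 a; rewrite le_eqVlt => /orP[/eqP <-|pa]; first by rewrite !mul0r.
  by have [_ _ gz] := vanish_at a pa; rewrite gain_given_fst_eq0 // mulr0.
Qed.

Lemma product_gain_given_snd_witness (b0 : B) (S : A * B -> Prop) f :
  (forall w, w.2 = b0 -> S w) -> vanish_outside S g0 g1 g2 ->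
  exists w, S w /\
    0 <= product_gain p1 p2 g0 g1 g2 w - (if w.2 == b0 then gain_given_snd p1 f w else 0).
Proof.
move=> Sb0 van; have [r [r0 mass e0 e2]] := product_gain_given_snd_weights Sb0 van.
apply: (expect_ge0_witness (q := pprod p1 r)) mass _ => [w||w nS].
- exact: mulr_ge0 (pp1.1 _) (r0 _).
- rewrite expectD expectN.
  have -> : expect (pprod p1 r) (fun w => if w.2 == b0 then gain_given_snd p1 f w else 0)
      = expect (pprod p1 (fun b => if b == b0 then r b else 0)) (gain_given_snd p1 f).
    by apply: eq_bigr => w _; rewrite /pprod; case: eqP; rewrite ?mulr0 ?mul0r.
  rewrite expect_product_gain ?expect_gain_given_snd ?pp1.2 //.
  by rewrite oppr0 addr0.
- have [z0 z1 z2] := van w nS.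
  rewrite /product_gain gain_joint_eq0 // gain_given_snd_eq0 // gain_given_fst_eq0 //.
  by case: eqP => [/Sb0 //|_]; rewrite !addr0 subrr.
Qed.

End GainWitnesses.

Lemma product_gain_given_fst_witness (R : realType) (A B : finType)
    (p1 : A -> R) (p2 : B -> R) (g0 g1 g2 : A * B -> R) (a0 : A) (S : A * B -> Prop) f :
  pmf p1 -> pmf p2 -> (forall w, w.1 = a0 -> S w) -> vanish_outside S g0 g1 g2 ->
  exists w, S w /\
    0 <= product_gain p1 p2 g0 g1 g2 w - (if w.1 == a0 then gain_given_fst p2 f w else 0).
Proof.
move=> pp1 pp2 Sa0 van.
have [|[b a] [Sw ge0]] := @product_gain_given_snd_witness R B A p2 p1 pp2 pp1
  (fun w => g0 (w.2, w.1)) (fun w => g2 (w.2, w.1)) (fun w => g1 (w.2, w.1))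
  a0 (fun w => S (w.2, w.1)) (fun w => f (w.2, w.1)) (fun w => Sa0 (w.2, w.1)).
  by move=> w /van[? ? ?].
exists (a, b); split => //.
move: ge0; rewrite /product_gain /gain_joint /gain_given_snd /gain_given_fst expect_pprod_swap /=.
by case: (a == a0); lra.
Qed.

Section StrongProduct.
Variables (R : realType) (A B : finType) (P1 : (A -> R) -> R) (P2 : (B -> R) -> R).
Hypotheses (c1 : coherent P1) (c2 : coherent P2).

Definition is_dominated_product (E : (A * B -> R) -> R) :=
  exists p1 p2, [/\ dominates P1 p1, dominates P2 p2 & E = expect (pprod p1 p2)].

Definition strong_product := lower_env is_dominated_product.

Lemma dominated_product_exists : exists E, is_dominated_product E.
Proof.
have [p1 d1 _] := coherent_envelope c1 (fun=> 0).
have [p2 d2 _] := coherent_envelope c2 (fun=> 0).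
by exists (expect (pprod p1 p2)), p1, p2.
Qed.

Lemma dominated_product_coherent E : is_dominated_product E -> coherent E.
Proof.
move=> [p1 [p2 [d1 d2 ->]]]; apply/coherent_expect/pmf_pprod.
  exact: dominates_pmf d1.
exact: dominates_pmf d2.
Qed.

Lemma strong_product_coherent : coherent strong_product.
Proof. exact: lower_env_coherent dominated_product_coherent dominated_product_exists. Qed.

Lemma strong_product_fst g : strong_product (fun w => g w.1) = P1 g.
Proof.
apply/eqP; rewrite eq_le; apply/andP; split.
- have [p1 d1 <-] := coherent_envelope c1 g.
  have [p2 d2 _] := coherent_envelope c2 (fun=> 0).
  rewrite -(expect_pprod_fst p1 g (dominates_pmf c2 d2).2).
  by apply: (lower_env_le dominated_product_coherent); exists p1, p2.
- apply: (lower_env_ge dominated_product_exists) => E [p1 [p2 [d1 d2 ->]]].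
  by rewrite expect_pprod_fst ?(dominates_pmf c2 d2).2.
Qed.

Lemma strong_product_snd h : strong_product (fun w => h w.2) = P2 h.
Proof.
apply/eqP; rewrite eq_le; apply/andP; split.
- have [p2 d2 <-] := coherent_envelope c2 h.
  have [p1 d1 _] := coherent_envelope c1 (fun=> 0).
  rewrite -(expect_pprod_snd p2 h (dominates_pmf c1 d1).2).
  by apply: (lower_env_le dominated_product_coherent); exists p1, p2.
- apply: (lower_env_ge dominated_product_exists) => E [p1 [p2 [d1 d2 ->]]].
  by rewrite expect_pprod_snd ?(dominates_pmf c1 d1).2.
Qed.

Definition irrelevance_models (E : (A * B -> R) -> R) : 'I_3 -> cmodel R (A * B)%type :=
  fun j => match val j with
  | 0 => @CModel R _ unitF (fun _ => tt) (fun _ => E)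
  | 1 => @CModel R _ B (fun w => w.2) (fun b f => P1 (fun a => f (a, b)))
  | _ => @CModel R _ A (fun w => w.1) (fun a f => P2 (fun b => f (a, b)))
  end.

Lemma product_gain_le_cgain (fs : 'I_3 -> A * B -> R) p1 p2 w :
  dominates P1 p1 -> dominates P2 p2 ->
  product_gain p1 p2 (fs ord0) (fs (lift ord0 ord0)) (fs (lift ord0 (lift ord0 ord0))) w
    <= \sum_(j < 3) cgain (irrelevance_models strong_product j) (fs j) w.
Proof.
move=> d1 d2; rewrite !big_ord_recl big_ord0 /cgain /product_gain /=.
have : strong_product (fs ord0) <= expect (pprod p1 p2) (fs ord0).
  by apply: (lower_env_le dominated_product_coherent); exists p1, p2.
have := d1 (fun a => fs (lift ord0 ord0) (a, w.2)).
have := d2 (fun b => fs (lift ord0 (lift ord0 ord0)) (w.1, b)).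
rewrite /gain_joint /gain_given_snd /gain_given_fst; lra.
Qed.

Lemma vanish_outside_support (E : (A * B -> R) -> R) (fs : 'I_3 -> A * B -> R)
    (Z : A * B -> Prop) :
  vanish_outside (fun w => Z w \/ exists j, csupp (irrelevance_models E j) (fs j) w)
    (fs ord0) (fs (lift ord0 ord0)) (fs (lift ord0 (lift ord0 ord0))).
Proof.
move=> w nS; split.
- by move=> w'; apply: boolp.contrapT => f0; apply: nS; right; exists ord0, w'.
- move=> a; apply: boolp.contrapT => f1; apply: nS; right.
  by exists (lift ord0 ord0), (a, w.2).
- move=> b; apply: boolp.contrapT => f2; apply: nS; right.
  by exists (lift ord0 (lift ord0 ord0)), (w.1, b).
Qed.

Lemma strong_product_jointly_coherent :
  jointly_coherent (irrelevance_models strong_product).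
Proof.
move=> fs j0 f z0; have van := vanish_outside_support (E := strong_product) (fs := fs).
have cgain_ge := product_gain_le_cgain fs.
case: j0 => [[|[|[|//]]] hj] /= in z0 *.
- (* The infimum defining the strong product need not be attained. *)
  apply: finite_approx_ge0 => e e0.
  have [_ [[p1 [p2 [d1 d2 ->]]] close]] :=
    lower_env_approx dominated_product_exists f e0.
  have [w ge0] := product_gain_joint_witness (dominates_pmf c1 d1) (dominates_pmf c2 d2)
    (fs ord0) (fs (lift ord0 ord0)) (fs (lift ord0 (lift ord0 ord0))) f.
  exists w; split; first by left; case: z0.
  have := cgain_ge p1 p2 w d1 d2; move: ge0.
  change (lower_env _ f) with (strong_product f) in close.
  by case: z0; rewrite /cgain /gain_joint /=; lra.
- have [p1 d1 e1] := coherent_envelope c1 (fun a => f (a, z0)).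
  have [p2 d2 _] := coherent_envelope c2 (fun=> 0).
  have [w [Sw ge0]] := product_gain_given_snd_witness (dominates_pmf c1 d1)
    (dominates_pmf c2 d2) f (fun w (e : w.2 = z0) => or_introl e) (van _).
  exists w; split => //; have := cgain_ge p1 p2 w d1 d2; move: ge0.
  rewrite /cgain /gain_given_snd /=; case: eqP => [wz|_]; last by lra.
  by rewrite wz e1; lra.
- have [p2 d2 e2] := coherent_envelope c2 (fun b => f (z0, b)).
  have [p1 d1 _] := coherent_envelope c1 (fun=> 0).
  have [w [Sw ge0]] := product_gain_given_fst_witness f (dominates_pmf c1 d1)
    (dominates_pmf c2 d2) (fun w (e : w.1 = z0) => or_introl e) (van _).
  exists w; split => //; have := cgain_ge p1 p2 w d1 d2; move: ge0.
  rewrite /cgain /gain_given_fst /=; case: eqP => [wz|_]; last by lra.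
  by rewrite wz e2; lra.
Qed.

Lemma strong_product_indep : indep_product P1 P2 strong_product.
Proof.
split; [exact: strong_product_coherent | exact: strong_product_fst |
        exact: strong_product_snd | exact: strong_product_jointly_coherent].
Qed.

End StrongProduct.

Section IndependentNaturalExtension.
Variables (R : realType) (A B : finType) (P1 : (A -> R) -> R) (P2 : (B -> R) -> R).
Hypotheses (c1 : coherent P1) (c2 : coherent P2).

Lemma indep_product_exists : exists E, indep_product P1 P2 E.
Proof. by exists (strong_product P1 P2); apply: strong_product_indep. Qed.

Lemma ine_coherent : coherent (ine P1 P2).
Proof. exact: lower_env_coherent (fun E => fun '(And4 cE _ _ _) => cE) indep_product_exists. Qed.

(* Joint coherence, tested with the gambles P2 f(w.1, .) for E, 0 for the
   model given b and f for the model given a, against f for E. *)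
Lemma indep_product_marginal_le E f :
  indep_product P1 P2 E -> E (fun w => P2 (fun b => f (w.1, b))) <= E f.
Proof.
case=> _ _ _ /(_ (fun j : 'I_3 => match val j with
                                  | 0 => fun w => P2 (fun b => f (w.1, b))
                                  | 1 => fun=> 0
                                  | _ => f end) ord0 f tt) [w [_]].
by rewrite !big_ord_recl big_ord0 /cgain /= coherent0 //; lra.
Qed.

Lemma ine_indicator_ge (o : A) (h : B -> R) : 0 <= P2 h ->
  P2 h * P1 (ind o) <= ine P1 P2 (fun w => (w.1 == o)%:R * h w.2).
Proof.
move=> h0; apply: (lower_env_ge indep_product_exists) => E indE.
apply: le_trans (indep_product_marginal_le _ indE); case: indE => _ marg _ _.
rewrite (marg (fun a => P2 (fun b => (a == o)%:R * h b))) -coherentZ //.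
rewrite (_ : (fun a => P2 _) = fun a => P2 h * ind o a) //.
by apply: boolp.funext => a; rewrite coherentZ ?ler0n // mulrC.
Qed.

End IndependentNaturalExtension.

Definition marginal_ext (R : realType) (X W : finType) (Qc : (X -> R) -> R)
    (Ec : X -> (W -> R) -> R) (h : X * W -> R) : R :=
  Qc (fun x => Ec x (fun w => h (x, w))).

Section MarginalExtension.
Variables (R : realType) (X W : finType) (Qc : (X -> R) -> R) (Ec : X -> (W -> R) -> R).
Hypotheses (cQ : coherent Qc) (cE : forall x, coherent (Ec x)).

Lemma marginal_ext_coherent : coherent (marginal_ext Qc Ec).
Proof.
split.
- move=> h; have [x hx] := coherent_ge_min cQ (fun x => Ec x (fun w => h (x, w))).
  have [w hw] := coherent_ge_min (cE x) (fun w => h (x, w)).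
  by exists (x, w); apply: le_trans hw hx.
- move=> l h l0; rewrite /marginal_ext -coherentZ //; congr Qc.
  by apply: boolp.funext => x; rewrite (coherentZ (cE x) (fun w => h (x, w))).
- move=> f g; apply: le_trans (coherentD cQ _ _) _.
  by apply: coherent_le => // x; apply: (coherentD (cE x)).
Qed.

Lemma marginal_ext_slice_le0 (h : X * W -> R) (x1 : X) :
  0 < Qc (ind x1) -> (forall x w, x != x1 -> h (x, w) = 0) ->
  marginal_ext Qc Ec h <= 0 -> Ec x1 (fun w => h (x1, w)) <= 0.
Proof.
move=> Qx1 h0; set c := Ec x1 _.
have -> : marginal_ext Qc Ec h = Qc (fun x => c * ind x1 x).
  congr Qc; apply: boolp.funext => x; rewrite /ind.
  case: eqVneq => [->|x_ne]; first by rewrite mulr1.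
  rewrite mulr0 -(coherent0 (cE x)); congr (Ec x); apply: boolp.funext => w.
  exact: h0.
rewrite leNgt => /negP mass0; rewrite leNgt; apply/negP => c0; apply: mass0.
by rewrite coherentZ ?ltW // mulr_gt0.
Qed.

End MarginalExtension.

Lemma Ecal_coherent (R : realType) (X O : nat -> finType) (n : nat)
    (Q : forall k, X k -> (X k.+1 -> R) -> R) (S : forall k, X k -> (O k -> R) -> R) :
  (forall k, (k < n)%N -> forall z : X k, coherent (Q k z)) ->
  (forall k, (1 <= k <= n)%N -> forall z : X k, coherent (S k z)) ->
  forall d k, (1 <= k)%N -> (k + d <= n)%N ->
  forall x : X k, coherent (@Ecal R X O Q S d k x).
Proof.
move=> hQ hS; elim=> [|d IH] k k1 kn x /=.
  by apply: hS; rewrite k1 -(addn0 k).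
apply: ine_coherent; first by apply: hS; rewrite k1 (leq_trans _ kn) // leq_addr.
apply: (marginal_ext_coherent (Ec := @Ecal R X O Q S d k.+1)).
  by apply: hQ; rewrite (leq_trans _ kn) // addnS ltnS leq_addr.
by move=> y; apply: IH; rewrite // addSnnS.
Qed.

Definition opt_gamble (R : realType) (X O : nat -> finType) (d k : nat)
    (o : XS O d k) (x xh : XS X d k) (y : Y X O d k) : R :=
  (@projO X O d k y == o)%:R * ((@projX X O d k y == x)%:R - (@projX X O d k y == xh)%:R).
Arguments opt_gamble R {X O} d {k} o x xh y.

Lemma opt_gamble_head_neq (R : realType) (X O : nat -> finType) d k o x xh
    (y1 x1 : X k) (w : W X O d.+1 k) :
  x1 != y1 -> opt_gamble R d.+1 (k := k) o (y1, x) (y1, xh) (x1, w) = 0.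
Proof. by move=> ne; rewrite /opt_gamble /= !xpair_eqE (negbTE ne) subrr mulr0. Qed.

Lemma opt_gamble_head_eq (R : realType) (X O : nat -> finType) d k
    (o1 : O k) o2 (x1 : X k) x xh (w : W X O d.+1 k) :
  opt_gamble R d.+1 (o1, o2) (x1, x) (x1, xh) (x1, w) =
  (w.1 == o1)%:R * opt_gamble R d o2 x xh w.2.
Proof.
rewrite /opt_gamble /= !xpair_eqE eqxx /=.
by case: (w.1 == o1); rewrite /= ?mul1r ?mul0r.
Qed.

Theorem theorem2 (R : realType) (X O : nat -> finType) (n : nat)
    (Q : forall k, X k -> (X k.+1 -> R) -> R)
    (S : forall k, X k -> (O k -> R) -> R)
    (hX0 : #|X 0%N| = 1%N)
    (hXne : forall k, (1 <= k <= n)%N -> (0 < #|X k|)%N)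
    (hOne : forall k, (1 <= k <= n)%N -> (0 < #|O k|)%N)
    (hQ : forall k, (k < n)%N -> forall z : X k, coherent (Q k z))
    (hS : forall k, (1 <= k <= n)%N -> forall z : X k, coherent (S k z))
    (hQpos : forall k, (k < n)%N -> forall (z : X k) (x : X k.+1),
        0 < upper (Q k z) (ind x))
    (hSpos : forall k, (1 <= k <= n)%N -> forall (z : X k) (o : O k),
        0 < upper (S k z) (ind o))
    (j d : nat) (hn : (j.+1 + d.+1 = n)%N)
    (z : X j) (o : XS O d.+1 j.+1) (xh : XS X d.+1 j.+1) :
  0 < Q j z (ind xh.1) ->
  0 < S j.+1 xh.1 (ind o.1) ->
  @opt R X O Q S d.+1 j z o xh ->
  @opt R X O Q S d j.+1 xh.1 o.2 xh.2.
Proof.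
move: xh o => [xh1 xh2] [o1 o2] /= Qpos Spos opt_j x.
have cE := Ecal_coherent hQ hS.
have hj : (j < n)%N by rewrite -hn addSn ltnS leq_addr.
have cS : coherent (S j.+1 xh1) by apply: hS; rewrite /= -hn leq_addr.
have cP : coherent (@Pcal R X O Q S d j.+1 xh1).
  apply: marginal_ext_coherent; first by apply: hQ; rewrite -hn addSn addnS ltnS leq_addr.
  by move=> y; apply: cE; rewrite // -hn addSnnS.
pose g := opt_gamble R d o2 x xh2.
have slice : ine (S j.+1 xh1) (@Pcal R X O Q S d j.+1 xh1)
               (fun w => (w.1 == o1)%:R * g w.2) <= 0.
  have -> : (fun w => (w.1 == o1)%:R * g w.2) =
            (fun w => opt_gamble R d.+1 (o1, o2) (xh1, x) (xh1, xh2) (xh1, w)).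
    by apply: boolp.funext => w; rewrite opt_gamble_head_eq.
  apply: (marginal_ext_slice_le0 (hQ j hj z) (cE d.+1 j.+1 isT (eq_leq hn)) Qpos
            (fun x' w => @opt_gamble_head_neq R X O d j.+1 _ _ _ xh1 x' w) (opt_j (xh1, x))).
rewrite leNgt; apply/negP => gpos.
have := ine_indicator_ge cS cP o1 (ltW gpos).
have := mulr_gt0 gpos Spos; lra.
Qed.
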